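(* Let $\lambda_1\ge\dots\ge\lambda_p\ge0$, $\gamma\ge0$, $r\in\{1,\dots,p\}$ and $i\in\{1,\dots,p\}$. Let $M,\Gamma\in\mathbb{R}^p$ with $\max_j|\Gamma_j|\le\gamma$ and put $T=M+\Gamma$. If $T\in H_r$ and $|T_i|>\lambda_r$, then $M^{(i)}\in H_r^{\gamma}$.
   Context: For $w$ (possibly with entries in $\mathbb{R}\cup\{\infty\}$), $|w|_{(1)}\ge\dots\ge|w|_{(p)}$ denote the ordered absolute values of its entries. $M^{(i)}$ is the vector with $M^{(i)}_j=M_j$ for $j\neq i$ and $M^{(i)}_i=\infty$. $$H_r=\Big\{w:\ \forall_{j\le r}\ \sum_{l=j}^r\lambda_l<\sum_{l=j}^r|w|_{(l)}\ \text{ and }\ \forall_{j\ge r+1}\ \sum_{l=r+1}^j\lambda_l\ge\sum_{l=r+1}^j|w|_{(l)}\Big\},$$ $$H_r^{\gamma}=\Big\{w:\ \forall_{j\le r}\ \sum_{l=j}^r(\lambda_l-\gamma)<\sum_{l=j}^r|w|_{(l)}\ \text{ and }\ \forall_{j\ge r+1}\ \sum_{l=r+1}^j(\lambda_l+\gamma)\ge\sum_{l=r+1}^j|w|_{(l)}\Big\}.$$ *)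

From HB Require Import structures.
From mathcomp Require Import all_boot all_order all_algebra.
From mathcomp Require Import all_classical all_reals ereal.
Set Implicit Arguments. Unset Strict Implicit. Unset Printing Implicit Defensive.
Import Order.TTheory GRing.Theory Num.Theory.
Local Open Scope ring_scope.
Local Open Scope ereal_scope.

Section Defs.
Variable R : realType.

(* |w|_(l), 1-indexed: the l-th largest absolute value of the entries of w *)
Definition ord_abs (p : nat) (w : 'I_p -> \bar R) (l : nat) : \bar R :=
  nth 0 (sort (fun x y : \bar R => y <= x) [seq `|w k| | k <- enum 'I_p]) l.-1.

(* H_r (lam indexed from 1: lam 1 >= ... >= lam p) *)
Definition H_set (p : nat) (lam : nat -> R) (r : nat) (w : 'I_p -> \bar R) : Prop :=
  (forall j, (1 <= j <= r)%N ->
     \sum_(j <= l < r.+1) (lam l)%:E < \sum_(j <= l < r.+1) ord_abs w l) /\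
  (forall j, (r.+1 <= j <= p)%N ->
     \sum_(r.+1 <= l < j.+1) ord_abs w l <= \sum_(r.+1 <= l < j.+1) (lam l)%:E).

Definition H_gamma (p : nat) (lam : nat -> R) (gamma : R) (r : nat)
    (w : 'I_p -> \bar R) : Prop :=
  (forall j, (1 <= j <= r)%N ->
     \sum_(j <= l < r.+1) (lam l - gamma)%:E < \sum_(j <= l < r.+1) ord_abs w l) /\
  (forall j, (r.+1 <= j <= p)%N ->
     \sum_(r.+1 <= l < j.+1) ord_abs w l <= \sum_(r.+1 <= l < j.+1) (lam l + gamma)%:E).

Definition replace_inf (p : nat) (M : 'I_p -> R) (i : 'I_p) : 'I_p -> \bar R :=
  fun j => if j == i then +oo else (M j)%:E.

End Defs.

(* Write T = M + Gamma and M' = M^(i).  Since |M_k| >= |T_k| - gamma for every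
   k and the entry of M' at i is infinite, at least l entries of M' are
   >= |T|_(l) - gamma, so |M'|_(l) >= |T|_(l) - gamma for every l.  For l > r,
   |T|_(l) <= |T|_(r+1) <= lambda_(r+1) <= lambda_r < |T_i|, so the infinite
   entry sits where T was already larger than |T|_(l); every other entry of M'
   exceeding |T|_(l) + gamma comes from an entry of T exceeding |T|_(l), and
   there are fewer than l of those, so |M'|_(l) <= |T|_(l) + gamma.  Summing
   these entrywise bounds over the ranges in the definitions of H_r and
   H_r^gamma transports the inequalities for T to those for M'. *)
From HB Require Import structures.
From mathcomp Require Import all_boot all_order all_algebra.
From mathcomp Require Import all_classical all_reals ereal.
From mathcomp Require Import zify lra.
Import Order.TTheory GRing.Theory Num.Theory.
Local Open Scope ring_scope.

Set Implicit Arguments.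
Unset Strict Implicit.
Unset Printing Implicit Defensive.

Section SortGe.
Variables (d : Order.disp_t) (T : orderType d) (x0 : T).
Local Open Scope order_scope.
Implicit Types (s : seq T) (m : nat) (c : T).

Local Notation ge := (fun x y : T => y <= x).
Local Notation sort_ge s := (sort ge s).

Lemma sorted_sort_ge s : sorted ge (sort_ge s).
Proof. by apply: sort_sorted => x y; exact: le_total. Qed.

Lemma nth_sort_ge_anti s m n : (m <= n < size s)%N ->
  nth x0 (sort_ge s) n <= nth x0 (sort_ge s) m.
Proof.
move=> /andP[mn ns].
apply: (sorted_leq_nth _ _ _ (sorted_sort_ge s)) => //.
- by move=> x y z /= yx zy; exact: le_trans zy yx.
- by rewrite inE size_sort (leq_ltn_trans mn).
- by rewrite inE size_sort.
Qed.

Lemma nth_sort_ge_le_take s m x : (m < size s)%N ->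
  x \in take m.+1 (sort_ge s) -> nth x0 (sort_ge s) m <= x.
Proof.
move=> ms /(nthP x0)[k]; rewrite size_takel ?size_sort // => km <-.
by rewrite nth_take //; apply: nth_sort_ge_anti; rewrite -ltnS km.
Qed.

Lemma nth_sort_ge_ge_drop s m x :
  x \in drop m (sort_ge s) -> x <= nth x0 (sort_ge s) m.
Proof.
move=> /(nthP x0)[k]; rewrite size_drop size_sort => km <-.
by rewrite nth_drop; apply: nth_sort_ge_anti; rewrite leq_addr -ltn_subRL.
Qed.

Lemma count_sort_ge_take_drop (P : pred T) s m :
  count P s = (count P (take m (sort_ge s)) + count P (drop m (sort_ge s)))%N.
Proof.
by rewrite -count_cat cat_take_drop; apply/permP; rewrite perm_sym perm_sort.
Qed.

Lemma count_take_sort_ge (P : pred T) s m : (m < size s)%N ->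
  {in take m.+1 (sort_ge s), forall x, P x} -> (m < count P s)%N.
Proof.
move=> ms Ptake; rewrite (count_sort_ge_take_drop P s m.+1).
have /eqP -> : count P (take m.+1 (sort_ge s)) == size (take m.+1 (sort_ge s)).
  by rewrite -all_count; apply/allP.
by rewrite size_takel ?size_sort // ltnS leq_addr.
Qed.

Lemma count_drop_sort_ge (P : pred T) s m :
  {in drop m (sort_ge s), forall x, ~~ P x} -> (count P s <= m)%N.
Proof.
move=> nPdrop; rewrite (count_sort_ge_take_drop P s m).
have -> : count P (drop m (sort_ge s)) = 0%N.
  by apply/eqP; rewrite eqn0Ngt -has_count; apply/hasPn.
by rewrite addn0 (leq_trans (count_size _ _)) // size_take; case: ltnP.
Qed.

Lemma count_ge_nth_sort s m : (m < size s)%N ->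
  (m < count (fun x => (nth x0 (sort_ge s) m <= x)%O) s)%N.
Proof.
by move=> ms; apply: count_take_sort_ge => // x /nth_sort_ge_le_take; apply.
Qed.

Lemma count_gt_nth_sort s m :
  (count (fun x => (nth x0 (sort_ge s) m < x)%O) s <= m)%N.
Proof. by apply: count_drop_sort_ge => x /nth_sort_ge_ge_drop; rewrite -leNgt. Qed.

Lemma le_nth_sort_ge s m c : (m < size s)%N ->
  (m < count (fun x => (c <= x)%O) s)%N -> c <= nth x0 (sort_ge s) m.
Proof.
move=> ms; apply: contraLR; rewrite -ltNge -leqNgt => nth_lt_c.
apply: count_drop_sort_ge => x /nth_sort_ge_ge_drop x_le.
by rewrite -ltNge (le_lt_trans x_le).
Qed.

Lemma nth_sort_ge_le s m c : (m < size s)%N ->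
  (count (fun x => (c < x)%O) s <= m)%N -> nth x0 (sort_ge s) m <= c.
Proof.
move=> ms; apply: contraLR; rewrite -ltNge -ltnNge => c_lt_nth.
by apply: count_take_sort_ge => // x /(nth_sort_ge_le_take ms); exact: lt_le_trans.
Qed.

Variables (I : Type) (idx : seq I).

Lemma nth_sort_map_lb (f g : I -> T) m c : (m < size idx)%N ->
  (forall k, nth x0 (sort_ge (map g idx)) m <= g k -> c <= f k) ->
  c <= nth x0 (sort_ge (map f idx)) m.
Proof.
move=> m_idx gf; apply: le_nth_sort_ge; rewrite ?size_map //.
have := count_ge_nth_sort (s := map g idx) (m := m).
rewrite size_map => /(_ m_idx).
by move/leq_trans; apply; rewrite !count_map; exact: sub_count.
Qed.

Lemma nth_sort_map_ub (f g : I -> T) m c : (m < size idx)%N ->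
  (forall k, c < f k -> nth x0 (sort_ge (map g idx)) m < g k) ->
  nth x0 (sort_ge (map f idx)) m <= c.
Proof.
move=> m_idx fg; apply: nth_sort_ge_le; rewrite ?size_map //.
apply: leq_trans (count_gt_nth_sort (map g idx) m); rewrite !count_map.
exact: sub_count.
Qed.

End SortGe.

Section OrderedAbsoluteValues.
Variables (R : realType) (p : nat).
Local Open Scope ereal_scope.
Implicit Types (v w : 'I_p -> \bar R) (l : nat) (c : \bar R).

Lemma ord_abs_anti w l l' : (0 < l <= l')%N -> (l' <= p)%N ->
  ord_abs w l' <= ord_abs w l.
Proof.
by move=> ll' l'p; apply: nth_sort_ge_anti; rewrite size_map size_enum_ord; lia.
Qed.

Lemma ord_abs_lb v w l c : (0 < l <= p)%N ->
  (forall k, ord_abs v l <= `|v k| -> c <= `|w k|) -> c <= ord_abs w l.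
Proof. by move=> lp; apply: nth_sort_map_lb; rewrite size_enum_ord; lia. Qed.

Lemma ord_abs_ub v w l c : (0 < l <= p)%N ->
  (forall k, c < `|w k| -> ord_abs v l < `|v k|) -> ord_abs w l <= c.
Proof. by move=> lp; apply: nth_sort_map_ub; rewrite size_enum_ord; lia. Qed.

Lemma ord_abs_fin_num (v : 'I_p -> R) l :
  ord_abs (fun k => (v k)%:E) l \is a fin_num.
Proof.
rewrite /ord_abs; set s := sort _ _.
have [ls|] := ltnP l.-1 (size s); last by move/(nth_default 0) ->.
have : nth 0 s l.-1 \in s by exact: mem_nth.
by rewrite mem_sort => /mapP[k _ ->]; rewrite abse_EFin.
Qed.

End OrderedAbsoluteValues.

Section Perturbation.
Variables (R : realType) (p : nat) (M Gam : 'I_p -> R) (gamma : R) (i : 'I_p).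
Hypothesis Gam_le : forall j, `|Gam j| <= gamma.

Lemma norm_perturbed_lb k : `|M k + Gam k| - gamma <= `|M k|.
Proof. have := ler_normD (M k) (Gam k); have := Gam_le k; lra. Qed.

Lemma norm_perturbed_ub k : `|M k| - gamma <= `|M k + Gam k|.
Proof.
have := ler_normB (M k + Gam k) (Gam k); rewrite addrK.
have := Gam_le k; lra.
Qed.

Local Open Scope ereal_scope.

Local Notation T := (fun j => (M j + Gam j)%:E).
Local Notation Mi := (replace_inf M i).

Lemma ord_abs_replace_inf_lb l (t : R) : (0 < l <= p)%N ->
  ord_abs T l = t%:E -> (t - gamma)%:E <= ord_abs Mi l.
Proof.
move=> lp Tl; apply: (ord_abs_lb (v := T)) lp _ => k; rewrite Tl /replace_inf.
case: eqP => _; first by rewrite leey.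
rewrite !abse_EFin !lee_fin => t_le.
by apply: le_trans (norm_perturbed_lb k); rewrite lerD2r.
Qed.

Lemma ord_abs_replace_inf_ub l (t : R) : (0 < l <= p)%N ->
  ord_abs T l = t%:E -> (t < `|M i + Gam i|)%R ->
  ord_abs Mi l <= (t + gamma)%:E.
Proof.
move=> lp Tl t_lt; apply: (ord_abs_ub (v := T)) lp _ => k; rewrite Tl /replace_inf.
case: eqP => [-> _|_]; first by rewrite abse_EFin lte_fin.
rewrite !abse_EFin !lte_fin -ltrBrDr => lt_Mk.
exact: lt_le_trans lt_Mk (norm_perturbed_ub k).
Qed.

Lemma ord_abs_EFin l : ord_abs T l = (fine (ord_abs T l))%:E.
Proof. by rewrite fineK // ord_abs_fin_num. Qed.

Lemma sum_replace_inf_lb (lam : nat -> R) m n : (0 < m)%N -> (n <= p.+1)%N ->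
  \sum_(m <= l < n) (lam l)%:E < \sum_(m <= l < n) ord_abs T l ->
  \sum_(m <= l < n) (lam l - gamma)%:E < \sum_(m <= l < n) ord_abs Mi l.
Proof.
move=> m0 np; pose t l := fine (ord_abs T l).
rewrite [X in _ < X -> _](eq_bigr (fun l => (t l)%:E)) => [|l _]; last first.
  exact: ord_abs_EFin.
rewrite !sumEFin lte_fin => lam_lt_t.
apply: (@lt_le_trans _ _ (\sum_(m <= l < n) (t l - gamma)%:E)).
  by rewrite !sumEFin lte_fin !sumrB ltrD2r.
rewrite big_nat_cond [leRHS]big_nat_cond.
apply: lee_sum => l /andP[/andP[ml ln] _].
by apply: ord_abs_replace_inf_lb; [lia | exact: ord_abs_EFin].
Qed.

Lemma sum_replace_inf_ub (lam : nat -> R) m n : (0 < m)%N -> (n <= p.+1)%N ->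
  (forall l, (m <= l < n)%N -> ord_abs T l < `|M i + Gam i|%:E) ->
  \sum_(m <= l < n) ord_abs T l <= \sum_(m <= l < n) (lam l)%:E ->
  \sum_(m <= l < n) ord_abs Mi l <= \sum_(m <= l < n) (lam l + gamma)%:E.
Proof.
move=> m0 np T_lt_Ti; pose t l := fine (ord_abs T l).
rewrite [X in X <= _ -> _](eq_bigr (fun l => (t l)%:E)) => [|l _]; last first.
  exact: ord_abs_EFin.
rewrite !sumEFin lee_fin => t_le_lam.
apply: (@le_trans _ _ (\sum_(m <= l < n) (t l + gamma)%:E)); last first.
  by rewrite !sumEFin lee_fin !big_split lerD2r.
rewrite big_nat_cond [leRHS]big_nat_cond.
apply: lee_sum => l /andP[/andP[ml ln] _].
apply: ord_abs_replace_inf_ub; [lia | exact: ord_abs_EFin |].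
by rewrite -lte_fin -ord_abs_EFin T_lt_Ti ?ml.
Qed.

End Perturbation.

Theorem lemma2 (R : realType) (p : nat) (lam : nat -> R) (gamma : R)
  (r : nat) (i : 'I_p) (M Gam : 'I_p -> R)
  (hlam : forall l, (1 <= l < p)%N -> lam l.+1 <= lam l)
  (hlam0 : 0 <= lam p)
  (hgamma : 0 <= gamma)
  (hr : (1 <= r <= p)%N)
  (hGam : forall j, `|Gam j| <= gamma)
  (hT : H_set lam r (fun j => (M j + Gam j)%:E))
  (hTi : lam r < `|M i + Gam i|) :
  H_gamma lam gamma r (replace_inf M i).
Proof.
set T := fun j => (M j + Gam j)%:E in hT; have [hT1 hT2] := hT.
split=> j hj; first by apply: sum_replace_inf_lb (hT1 j hj) => //; lia.
have rp : (r < p)%N by lia.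
have T_r1 : (ord_abs T r.+1 <= (lam r.+1)%:E)%E.
  by have := hT2 r.+1; rewrite leqnn rp !big_nat1; apply.
apply: sum_replace_inf_ub (hT2 j hj) => //; first lia.
move=> l /andP[rl lj].
have T_l : (ord_abs T l <= ord_abs T r.+1)%E by apply: ord_abs_anti; lia.
apply: le_lt_trans T_l _; apply: le_lt_trans T_r1 _; rewrite lte_fin.
by apply: le_lt_trans hTi; apply: hlam; lia.
Qed.
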